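(* Let $N\ge 1$ and $S_{<N/2}=\{x\in\{0,1\}^N : wt(x)<N/2\}$. There is a quantum algorithm that, for every $x\in S_{<N/2}$, identifies $x$ using a single parity-restricted query to the IP oracle for $x$.
   Context: $wt(\cdot)$ denotes Hamming weight. For $x\in\{0,1\}^N$, the IP (inner product) oracle is the unitary acting by $|\tilde q\rangle\mapsto(-1)^{\tilde q\cdot x}|\tilde q\rangle$ for $\tilde q\in\{0,1\}^N$, where $\tilde q\cdot x=\sum_i\tilde q_ix_i$. A query is parity-restricted if the query register is in a superposition only of strings $\tilde q$ with even Hamming weight $wt(\tilde q)$. *)

From HB Require Import structures.
From mathcomp Require Import all_boot all_order all_algebra all_field.
Set Implicit Arguments. Unset Strict Implicit. Unset Printing Implicit Defensive.
Import Order.TTheory GRing.Theory Num.Theory.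
Local Open Scope ring_scope.

Definition bitstr (N : nat) := {ffun 'I_N -> bool}.

Definition wt N (x : bitstr N) : nat := #|[pred i | x i]|.

(* q . x = sum_i q_i x_i (as a natural number; only its parity matters) *)
Definition dotb N (q x : bitstr N) : nat := #|[pred i | q i && x i]|.

(* Basis states of the full register: query register (q in {0,1}^N)
   tensored with a workspace of dimension m. *)
Definition reg N m := (bitstr N * 'I_m)%type.

Definition IP_query N m (x : bitstr N) (psi : reg N m -> algC) : reg N m -> algC :=
  fun t => (-1) ^+ dotb t.1 x * psi t.

Definition parity_restricted N m (psi : reg N m -> algC) : Prop :=
  forall t : reg N m, odd (wt t.1) -> psi t = 0.

Definition normalized (T : finType) (psi : T -> algC) : Prop :=
  \sum_(t : T) `|psi t| ^+ 2 = 1.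

Definition unitary (T : finType) (U : T -> T -> algC) : Prop :=
  forall a b : T, \sum_(c : T) (U c a)^* * U c b = (a == b)%:R.

Definition apply_op (T : finType) (U : T -> T -> algC) (psi : T -> algC) : T -> algC :=
  fun a => \sum_(b : T) U a b * psi b.

(* Prepare the uniform superposition over even-weight strings, query, and
   apply the Hadamard transform.  Since the even-weight projector is
   (1 + (-1)^wt q)/2 and (-1)^wt q (-1)^(q.x) = (-1)^(q.~x), the final state is
   (|x> + |~x>)/sqrt 2: measuring yields x or its complement ~x with
   probability 1/2 each.  When wt x < N/2, exactly one of the two has weight
   below N/2, so the output "the outcome if light, else its complement"
   is always x. *)

From mathcomp Require Import all_boot all_order all_algebra all_field.
From mathcomp Require Import ring zify.
Import Order.TTheory GRing.Theory Num.Theory.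
Set Implicit Arguments. Unset Strict Implicit.
Local Open Scope ring_scope.

Definition compb N (x : bitstr N) : bitstr N := [ffun i => ~~ x i].

Lemma compbK N : involutive (@compb N).
Proof. by move=> x; apply/ffunP => i; rewrite !ffunE negbK. Qed.

Lemma wt_compb N (x : bitstr N) : (wt x + wt (compb x))%N = N.
Proof.
rewrite -[in RHS](card_ord N) -(cardC [pred i | x i]) /wt; congr (_ + _)%N.
by apply: eq_card => i; rewrite !inE ffunE.
Qed.

Lemma compb_neq N (x : bitstr N) : (0 < N)%N -> compb x != x.
Proof. by move=> N_gt0; apply/eqP => /ffunP/(_ (Ordinal N_gt0)); rewrite ffunE; case: (x _). Qed.

Lemma dotbC N (q x : bitstr N) : dotb q x = dotb x q.
Proof. by apply: eq_card => i; rewrite !inE andbC. Qed.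

Lemma dotb_compb N (q x : bitstr N) : (dotb q x + dotb q (compb x))%N = wt q.
Proof.
rewrite /dotb /wt -(cardID [pred i | x i] [pred i | q i]); congr (_ + _)%N.
by apply: eq_card => i; rewrite !inE ffunE andbC.
Qed.

Lemma signr_card (T : finType) (P : pred T) :
  (-1 : algC) ^+ #|P| = \prod_i (-1) ^+ P i.
Proof.
rewrite -sum1_card big_mkcond /= expr_sum; apply: eq_bigr => i _.
by rewrite unfold_in; case: (P i).
Qed.

Lemma signr_wt_dotb N (q x : bitstr N) :
  (-1 : algC) ^+ wt q * (-1) ^+ dotb q x = (-1) ^+ dotb q (compb x).
Proof.
by rewrite -(dotb_compb q x) -exprD addnAC addnn exprD -mul2n exprM sqrrN !expr1n mul1r.
Qed.

Lemma sum_bitstr_prod N (F : 'I_N -> bool -> algC) :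
  \sum_(q : bitstr N) \prod_i F i (q i) = \prod_i (F i true + F i false).
Proof.
transitivity (\prod_i \sum_(c : bool) F i c); first by rewrite bigA_distr_bigA.
by apply: eq_bigr => i _; rewrite big_bool.
Qed.

Lemma sum_signr_dotb N (a b : bitstr N) :
  \sum_(q : bitstr N) (-1 : algC) ^+ dotb q a * (-1) ^+ dotb q b
    = 2 ^+ N * (a == b)%:R.
Proof.
have factor q : (-1 : algC) ^+ dotb q a * (-1) ^+ dotb q b
    = \prod_i ((-1) ^+ (q i && a i) * (-1) ^+ (q i && b i)).
  by rewrite /dotb !signr_card -big_split.
rewrite (eq_bigr _ (fun q _ => factor q)).
rewrite (sum_bitstr_prod (fun i c => (-1) ^+ (c && a i) * (-1) ^+ (c && b i))) /=.
under eq_bigr => i _ do rewrite expr0 mul1r.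
under eq_bigr => i _ do rewrite -signr_addb.
case: eqVneq => [->|/eqP a_neq_b].
  rewrite mulr1 -[in RHS](card_ord N) -prodr_const; apply: eq_bigr => i _.
  by rewrite addbb.
have [i a_i_neq] : exists i, a i != b i.
  apply/existsP; rewrite -negb_forall; apply/negP => /forallP ab; apply: a_neq_b.
  by apply/ffunP => i; apply/eqP.
by rewrite mulr0 (bigD1 i) //= -negb_eqb a_i_neq addNr mul0r.
Qed.

Lemma even_indicator n : (~~ odd n)%:R = (1 + (-1 : algC) ^+ n) / 2.
Proof.
rewrite -signr_odd; case: (odd n) => /=; first by rewrite subrr mul0r.
by rewrite expr0 divff // (pnatr_eq0 algC 2).
Qed.

Lemma sum_even_signr_dotb N (a b : bitstr N) :
  \sum_(q : bitstr N) (~~ odd (wt q))%:R * ((-1 : algC) ^+ dotb q a * (-1) ^+ dotb q b)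
    = 2 ^+ N / 2 * ((a == b)%:R + (compb a == b)%:R).
Proof.
transitivity ((\sum_(q : bitstr N) (-1 : algC) ^+ dotb q a * (-1) ^+ dotb q b
   + \sum_(q : bitstr N) (-1) ^+ dotb q (compb a) * (-1) ^+ dotb q b) / 2).
  rewrite -big_split mulr_suml /=; apply: eq_bigr => q _.
  by rewrite even_indicator -signr_wt_dotb; ring.
by rewrite sum_signr_dotb sum_signr_dotb; ring.
Qed.

Lemma sum_on_pair (T : finType) (R : nmodType) (F : T -> R) (a b : T) :
  a != b -> (forall t, t != a -> t != b -> F t = 0) ->
  \sum_t F t = F a + F b.
Proof.
move=> a_neq_b F0; rewrite (bigD1 a) //= (bigD1 b) 1?eq_sym //= big1 ?addr0 //.
by move=> t /andP [tb ta]; apply: F0.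
Qed.

Section OneQueryAlgorithm.

Variable N : nat.

Let scale : algC := (sqrtC (2 ^+ N))^-1.

Lemma scale_ge0 : 0 <= scale.
Proof. by rewrite invr_ge0 sqrtC_ge0 exprn_ge0 ?ler0n. Qed.

Lemma scale_sqr : scale ^+ 2 = (2 ^+ N)^-1.
Proof. by rewrite exprVn sqrtCK. Qed.

Lemma two_pow_neq0 : (2 ^+ N : algC) != 0.
Proof. by rewrite expf_neq0 // pnatr_eq0. Qed.

Lemma sum_reg1 (G : bitstr N -> algC) :
  \sum_(t : reg N 1) G t.1 = \sum_(q : bitstr N) G q.
Proof.
transitivity (\sum_(q : bitstr N) \sum_(w < 1) G q); first by rewrite pair_bigA.
by apply: eq_bigr => q _; rewrite big_ord1.
Qed.

Definition even_state (t : reg N 1) : algC :=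
  if odd (wt t.1) then 0 else sqrtC 2 * scale.

Definition hadamard (o t : reg N 1) : algC := scale * (-1) ^+ dotb t.1 o.1.

Definition decode (t : reg N 1) : bitstr N :=
  if ((wt t.1).*2 < N)%N then t.1 else compb t.1.

Lemma even_state_parity_restricted : parity_restricted even_state.
Proof. by move=> t /= odd_t; rewrite /even_state odd_t. Qed.

Lemma even_state_normalized : (0 < N)%N -> normalized even_state.
Proof.
move=> N_gt0; pose z : bitstr N := [ffun=> false].
have dotb_z q : dotb q z = 0%N.
  by apply: eq_card0 => i; rewrite !inE ffunE andbF.
have := sum_even_signr_dotb z z.
rewrite eqxx (negPf (compb_neq z N_gt0)) addr0 mulr1.
under eq_bigr => q _ do rewrite dotb_z expr0 mulr1 mulr1.
move=> sum_even; rewrite /normalized (sum_reg1 (fun q => `|even_state (q, ord0)| ^+ 2)).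
transitivity (\sum_(q : bitstr N) (~~ odd (wt q))%:R * (2 / 2 ^+ N) : algC).
  apply: eq_bigr => q _; rewrite /even_state /=.
  case: (odd _); first by rewrite normr0 expr0n mul0r.
  rewrite ger0_norm ?mulr_ge0 ?sqrtC_ge0 ?ler0n ?scale_ge0 //.
  by rewrite exprMn sqrtCK scale_sqr mul1r.
rewrite -mulr_suml sum_even; have P_neq0 := two_pow_neq0; by field.
Qed.

Lemma hadamard_unitary : unitary hadamard.
Proof.
move=> [a i] [b j]; rewrite (ord1 i) (ord1 j) xpair_eqE eqxx andbT.
rewrite (sum_reg1 (fun q => (hadamard (q, ord0) (a, ord0))^* * hadamard (q, ord0) (b, ord0))).
transitivity (scale ^+ 2 * \sum_(q : bitstr N) (-1) ^+ dotb q a * (-1) ^+ dotb q b).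
  rewrite mulr_sumr; apply: eq_bigr => q _; rewrite /hadamard /=.
  by rewrite rmorphM /= geC0_conj ?scale_ge0 // rmorph_sign !(dotbC _ q); ring.
by rewrite sum_signr_dotb scale_sqr mulrA mulVf ?two_pow_neq0 ?mul1r.
Qed.

Lemma hadamard_IP_even_state (x : bitstr N) (o : reg N 1) :
  apply_op hadamard (IP_query x even_state) o
    = sqrtC 2 / 2 * ((o.1 == x)%:R + (compb o.1 == x)%:R).
Proof.
case: o => o i; rewrite /apply_op /IP_query /=.
rewrite (sum_reg1 (fun q => hadamard (o, i) (q, ord0)
                   * ((-1) ^+ dotb q x * even_state (q, ord0)))).
transitivity (sqrtC 2 * scale ^+ 2
   * \sum_(q : bitstr N) (~~ odd (wt q))%:R * ((-1) ^+ dotb q o * (-1) ^+ dotb q x)).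
  rewrite mulr_sumr; apply: eq_bigr => q _; rewrite /hadamard /even_state /=.
  by case: (odd (wt q)) => /=; ring.
rewrite sum_even_signr_dotb scale_sqr; have P_neq0 := two_pow_neq0; by field.
Qed.

Lemma decode_light (x : bitstr N) : ((wt x).*2 < N)%N ->
  decode (x, ord0) = x /\ decode (compb x, ord0) = x.
Proof.
move=> light; rewrite /decode /= light compbK; split=> //.
have := wt_compb x; case: ltnP => //; lia.
Qed.

End OneQueryAlgorithm.

Theorem lemma1 (N : nat) (hN : (1 <= N)%N) :
  exists (m : nat) (psi : reg N m -> algC) (U : reg N m -> reg N m -> algC)
         (dec : reg N m -> bitstr N),
    normalized psi /\ parity_restricted psi /\ unitary U /\
    forall x : bitstr N, ((wt x).*2 < N)%N ->
      \sum_(o : reg N m | dec o == x) `|apply_op U (IP_query x psi) o| ^+ 2 = 1.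
Proof.
exists 1%N, (@even_state N), (@hadamard N), (@decode N).
split; first exact: even_state_normalized.
split; first exact: even_state_parity_restricted.
split; first exact: hadamard_unitary.
move=> x light; have [dec_x dec_cx] := decode_light light.
have cx_neq_x := compb_neq x hN.
rewrite big_mkcond /= (sum_reg1 (fun q => if decode (q, ord0) == x then
    `|apply_op (@hadamard N) (IP_query x (@even_state N)) (q, ord0)| ^+ 2 else 0)).
rewrite (@sum_on_pair _ _ _ x (compb x)) 1?eq_sym //; last first.
  move=> q q_neq_x q_neq_cx; rewrite hadamard_IP_even_state /= (negPf q_neq_x).
  rewrite (_ : compb q == x = false) ?addr0 ?mulr0 ?normr0 ?expr0n ?if_same //.
  by apply: contraNF q_neq_cx => /eqP <-; rewrite compbK.
rewrite dec_x dec_cx eqxx !hadamard_IP_even_state /= compbK eqxx (negPf cx_neq_x).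
rewrite addr0 add0r mulr1 ger0_norm ?divr_ge0 ?sqrtC_ge0 ?ler0n //.
by rewrite expr_div_n sqrtCK; field.
Qed.
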